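(* Let $\mathcal G$ be a pseudogroup on a compact metric space $X$ with finite generating set $\mathcal G_1$. Then for every $x\in X$, $n\in\mathbb N$ and $\varepsilon>0$, the sets $B_n(x,\varepsilon)$, $B_n[x,\varepsilon]$ and $\Phi_\varepsilon(x)$ are Borel subsets of $X$.
   Context: $\mathrm{Homeo}(X)$: homeomorphisms $g:D_g\to R_g$ between open subsets of $X$, composed on natural domains $D_{h\circ g}=g^{-1}(D_h)$. A pseudogroup is a subset of $\mathrm{Homeo}(X)$ containing $\mathrm{id}_X$, closed under composition, inversion, restriction to open subsets, and gluing along open covers of the domain; $\mathcal G_1$ generates it if every element locally coincides with finite compositions of elements of $\mathcal G_1$ and their inverses. Let $\mathcal G_n=\{g_1\circ\cdots\circ g_n: g_i\in\mathcal G_1\}$, $\mathcal G_n^x=\{g\in\mathcal G_n: x\in D_g\}$, $B_n(x,\varepsilon)=\{y\in X: d(g(x),g(y))<\varepsilon\ \forall g\in\mathcal G_n^x\cap\mathcal G_n^y\}$, $B_n[x,\varepsilon]=\{y\in X: d(g(x),g(y))\le\varepsilon\ \forall g\in\mathcal G_n^x\cap\mathcal G_n^y\}$, and $\Phi_\varepsilon(x)=\bigcap_{n\in\mathbb N}B_n[x,\varepsilon]$. *)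

From HB Require Import structures.
From mathcomp Require Import all_boot all_order all_algebra.
From mathcomp Require Import all_classical all_reals topology measure.
Set Implicit Arguments. Unset Strict Implicit. Unset Printing Implicit Defensive.
Import Order.TTheory GRing.Theory Num.Theory.
Local Open Scope classical_set_scope.
Local Open Scope ring_scope.

(** Candidate elements of Homeo(X): a map g : D_g -> R_g between subsets of X,
    represented by its domain, range, the map and its inverse (values outside
    D_g / R_g are irrelevant). *)
Record phomeo (X : Type) := PHomeo {
  ph_dom : set X; ph_ran : set X; ph_fun : X -> X; ph_inv : X -> X }.

Fixpoint all_in (T : Type) (P : set T) (s : seq T) : Prop :=
  if s is x :: s' then P x /\ all_in P s' else True.

Section Pseudogroups.
Variable X : topologicalType.

Definition is_phomeo (g : phomeo X) : Prop :=
  [/\ open (ph_dom g) /\ open (ph_ran g),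
      (forall x, ph_dom g x -> ph_ran g (ph_fun g x) /\ ph_inv g (ph_fun g x) = x),
      (forall y, ph_ran g y -> ph_dom g (ph_inv g y) /\ ph_fun g (ph_inv g y) = y),
      {within ph_dom g, continuous (ph_fun g)} &
      {within ph_ran g, continuous (ph_inv g)}].

Definition ph_eq (g h : phomeo X) : Prop :=
  [/\ ph_dom g = ph_dom h, ph_ran g = ph_ran h,
      (forall x, ph_dom g x -> ph_fun g x = ph_fun h x) &
      (forall y, ph_ran g y -> ph_inv g y = ph_inv h y)].

Definition ph_id : phomeo X := PHomeo setT setT id id.

Definition ph_comp (h g : phomeo X) : phomeo X :=
  PHomeo (ph_dom g `&` (ph_fun g @^-1` ph_dom h))
         (ph_ran h `&` (ph_inv h @^-1` ph_ran g))
         (ph_fun h \o ph_fun g) (ph_inv g \o ph_inv h).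

Definition ph_invert (g : phomeo X) : phomeo X :=
  PHomeo (ph_ran g) (ph_dom g) (ph_inv g) (ph_fun g).

Definition ph_restrict (g : phomeo X) (U : set X) : phomeo X :=
  PHomeo (ph_dom g `&` U) (ph_ran g `&` (ph_inv g @^-1` U)) (ph_fun g) (ph_inv g).

Definition is_pseudogroup (G : set (phomeo X)) : Prop :=
  [/\ (forall g, G g -> is_phomeo g) /\
        (forall g h, G g -> ph_eq g h -> G h),
      G ph_id /\ (forall g h, G g -> G h -> G (ph_comp h g)),
      (forall g, G g -> G (ph_invert g)) /\
      (forall g U, G g -> open U -> G (ph_restrict g U)) &
      (forall g (I : Type) (U : I -> set X), is_phomeo g ->
         (forall i, open (U i)) -> ph_dom g = \bigcup_i U i ->
         (forall i, G (ph_restrict g (U i))) -> G g)].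

Definition ph_compose (s : seq (phomeo X)) : phomeo X := foldr ph_comp ph_id s.

Definition ph_letter (l : bool * phomeo X) : phomeo X :=
  if l.1 then l.2 else ph_invert l.2.

Definition generates (G1 G : set (phomeo X)) : Prop :=
  G1 `<=` G /\
  forall g, G g -> forall x, ph_dom g x ->
    exists (w : seq (bool * phomeo X)) (U : set X),
      [/\ all_in (fun l => G1 l.2) w /\ open U, U x, U `<=` ph_dom g,
          U `<=` ph_dom (ph_compose (map ph_letter w)) &
          forall y, U y -> ph_fun g y = ph_fun (ph_compose (map ph_letter w)) y].

Definition in_Gn (G1 : set (phomeo X)) (n : nat) (s : seq (phomeo X)) : Prop :=
  size s = n /\ all_in G1 s.

Definition borel (A : set X) : Prop := <<s open >> A.

End Pseudogroups.

Section DynBalls.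
Variables (R : realType) (X : metricType R).

Definition Bn (G1 : set (phomeo X)) (n : nat) (x : X) (e : R) : set X :=
  [set y | forall s, in_Gn G1 n s ->
     ph_dom (ph_compose s) x -> ph_dom (ph_compose s) y ->
     mdist (ph_fun (ph_compose s) x) (ph_fun (ph_compose s) y) < e].

Definition Bn_closed (G1 : set (phomeo X)) (n : nat) (x : X) (e : R) : set X :=
  [set y | forall s, in_Gn G1 n s ->
     ph_dom (ph_compose s) x -> ph_dom (ph_compose s) y ->
     mdist (ph_fun (ph_compose s) x) (ph_fun (ph_compose s) y) <= e].

Definition Phi (G1 : set (phomeo X)) (e : R) (x : X) : set X :=
  \bigcap_(n in [set: nat]) Bn_closed G1 n x e.

End DynBalls.

From HB Require Import structures.
From mathcomp Require Import all_boot all_order all_algebra.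
From mathcomp Require Import all_classical all_reals topology measure.
Import Order.TTheory GRing.Theory Num.Theory.
Local Open Scope classical_set_scope.
Local Open Scope ring_scope.

(** A composite of n generators is a continuous map on an open domain, so for
    a fixed word s the condition that y imposes through s is Borel: in the
    strict case it is the complement of the domain together with an open set,
    in the non-strict case it is a closed set.  B_n(x,e) and B_n[x,e] are
    intersections of these conditions over the finitely many words of length
    n, and Phi_e(x) is a countable intersection of the B_n[x,e]. *)

Section BorelSets.
Context {X : topologicalType}.
Implicit Types A B : set X.

Lemma borel_open A : open A -> borel A.
Proof. exact: sub_sigma_algebra. Qed.

Lemma borelC A : borel A -> borel (~` A).
Proof. by move=> bA; rewrite -setTD; apply: sigma_algebraCD. Qed.

Lemma borelT : borel [set: X].
Proof. by rewrite -setC0; apply: borelC; apply: sigma_algebra0. Qed.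

Lemma borelI A B : borel A -> borel B -> borel (A `&` B).
Proof.
have [_ _ _ setI_borel] :=
  (sigma_algebraP (fun S _ => @subsetT X S)).1 (smallest_sigma_algebra setT open).
exact: setI_borel.
Qed.

Lemma borelU A B : borel A -> borel B -> borel (A `|` B).
Proof.
move=> /borelC bA /borelC bB; rewrite -[_ `|` _]setCK setCU.
by apply: borelC; apply: borelI.
Qed.

Lemma borel_bigcap_nat (F : nat -> set X) :
  (forall n, borel (F n)) -> borel (\bigcap_n F n).
Proof.
move=> bF; rewrite -[\bigcap_n F n]setCK setC_bigcap; apply: borelC.
rewrite bigcup_mkcond; apply: sigma_algebra_bigcup => n.
by rewrite mem_setT; apply: borelC.
Qed.

Lemma borel_fin_bigcap (I : Type) (D : set I) (F : I -> set X) :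
  finite_set D -> (forall i, D i -> borel (F i)) -> borel (\bigcap_(i in D) F i).
Proof.
elim/Pchoice: I => I in D F * => Dfin bF.
rewrite -bigsetI_fset_set// big_seq.
apply: big_ind => [|A B|i]; [exact: borelT | exact: borelI |].
by rewrite in_fset_set ?inE//; apply: bF.
Qed.

Lemma borel_implies (P : Prop) A : (P -> borel A) -> borel [set y | P -> A y].
Proof.
have [p bA|np _] := pselect P.
  suff -> : [set y | P -> A y] = A by exact: bA.
  by apply/seteqP; split => y //=; apply.
suff -> : [set y | P -> A y] = setT by exact: borelT.
by apply/seteqP; split => y // _ /np.
Qed.

End BorelSets.

Section PartialMaps.
Context {X : topologicalType}.
Implicit Types g h : phomeo X.

Definition ph_continuous g : Prop :=
  open (ph_dom g) /\ forall V, open V -> open (ph_dom g `&` ph_fun g @^-1` V).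

Lemma is_phomeo_continuous g : is_phomeo g -> ph_continuous g.
Proof.
case=> -[oD _] _ _ cf _; split => //.
by apply/continuous_inP => //; rewrite -continuous_open_subspace.
Qed.

Lemma ph_continuous_id : ph_continuous (@ph_id X).
Proof. by split => [|V oV]; [exact: openT | rewrite setTI]. Qed.

Lemma ph_continuous_comp h g :
  ph_continuous h -> ph_continuous g -> ph_continuous (ph_comp h g).
Proof.
move=> [oDh ch] [oDg cg]; split => [|V oV] /=; first exact: cg.
rewrite (_ : _ `&` _ = ph_dom g `&` ph_fun g @^-1` (ph_dom h `&` ph_fun h @^-1` V)).
  exact/cg/ch.
by apply/seteqP; split => y /=; tauto.
Qed.

Lemma ph_continuous_compose (G1 : set (phomeo X)) s :
  (forall g, G1 g -> is_phomeo g) -> all_in G1 s -> ph_continuous (ph_compose s).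
Proof.
move=> G1homeo; elim: s => [|g s IHs] /=; first by move=> _; exact: ph_continuous_id.
case=> G1g G1s; apply: ph_continuous_comp; last exact: IHs.
by apply: is_phomeo_continuous; apply: G1homeo.
Qed.

Lemma borel_ph_preimage_open g V : ph_continuous g -> open V ->
  borel [set y | ph_dom g y -> V (ph_fun g y)].
Proof.
move=> [oD cg] oV.
rewrite (_ : [set y | _] = ~` ph_dom g `|` (ph_dom g `&` ph_fun g @^-1` V)).
  by apply: borelU; [apply: borelC | ]; apply: borel_open; [|apply: cg].
apply/seteqP; split => y /=; last by case=> [nDy /nDy|[]].
by have [Dy /(_ Dy)|] := pselect (ph_dom g y); [right | left].
Qed.

Lemma borel_ph_preimage_closed g C : ph_continuous g -> closed C ->
  borel [set y | ph_dom g y -> C (ph_fun g y)].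
Proof.
move=> [_ cg] cC.
rewrite (_ : [set y | _] = ~` (ph_dom g `&` ph_fun g @^-1` ~` C)).
  by apply: borelC; apply: borel_open; apply: cg; apply: closed_openC.
apply/seteqP; split => y /=; first by move=> CDy [/CDy].
by move=> nDCy Dy; apply: contrapT => /(conj Dy).
Qed.

Lemma borel_forall_words (G1 : set (phomeo X)) n (F : seq (phomeo X) -> set X) :
  finite_set G1 -> (forall s, in_Gn G1 n s -> borel (F s)) ->
  borel [set y | forall s, in_Gn G1 n s -> F s y].
Proof.
move=> G1fin; elim: n F => [|n IHn] F bF.
  rewrite (_ : [set y | _] = F [::]); first exact: bF.
  by apply/seteqP; split => y /= Fy; [apply: Fy | case=> [|g s] []].
rewrite (_ : [set y | _] =
    \bigcap_(g in G1) [set y | forall s, in_Gn G1 n s -> F (g :: s) y]).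
  apply: borel_fin_bigcap => // g G1g; apply: IHn => s [sn G1s].
  by apply: bF; split => /=; [rewrite sn | split].
apply/seteqP; split => y /=.
  by move=> Fy g G1g s [sn G1s]; apply: Fy; split => /=; [rewrite sn | split].
by move=> Fy [|g s] [] // [sn] [G1g G1s]; apply: Fy.
Qed.

Lemma borel_dynamical_set (G1 : set (phomeo X)) n x (P : X -> set X) :
  finite_set G1 -> (forall g, G1 g -> is_phomeo g) ->
  (forall a g, ph_continuous g -> borel [set y | ph_dom g y -> P a (ph_fun g y)]) ->
  borel [set y | forall s, in_Gn G1 n s ->
    ph_dom (ph_compose s) x -> ph_dom (ph_compose s) y ->
    P (ph_fun (ph_compose s) x) (ph_fun (ph_compose s) y)].
Proof.
move=> G1fin G1homeo bP; apply: borel_forall_words => // s [_ G1s].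
apply: borel_implies => _; apply: bP; exact: ph_continuous_compose _ _ G1homeo G1s.
Qed.

End PartialMaps.

Section MetricBalls.
Context {R : realType} {X : metricType R}.

Lemma open_mdist_lt (a : X) (e : R) : open [set w | mdist a w < e].
Proof.
rewrite openE => w aw; apply/nbhs_ballP.
exists (e - mdist a w) => [|z]; first by rewrite /= subr_gt0.
rewrite ballEmdist /= ltrBrDl => wz.
exact: le_lt_trans (metric_triangle a w z) wz.
Qed.

Lemma closed_mdist_le (a : X) (e : R) : closed [set w | mdist a w <= e].
Proof.
rewrite (_ : [set w | _] = ~` [set w | e < mdist a w]).
  apply: open_closedC; rewrite openE => w aw; apply/nbhs_ballP.
  exists (mdist a w - e) => [|z]; first by rewrite /= subr_gt0.
  rewrite ballEmdist /= ltrBrDl => wz.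
  rewrite -(ltrD2r (mdist w z)) (lt_le_trans wz)//.
  by rewrite [mdist w z]metric_sym metric_triangle.
by apply/seteqP; split => w /=; rewrite leNgt => /negP.
Qed.

End MetricBalls.

Theorem mainTheorem4 (R : realType) (X : metricType R)
  (G G1 : set (phomeo X)) :
  compact [set: X] ->
  is_pseudogroup G ->
  finite_set G1 ->
  (forall g, G1 g -> is_phomeo g) ->
  generates G1 G ->
  forall (x : X) (n : nat) (e : R), 0 < e ->
    [/\ borel (Bn G1 n x e), borel (Bn_closed G1 n x e) & borel (Phi G1 e x)].
Proof.
move=> _ _ G1fin G1homeo _ x n e _.
have Bn_closed_borel m : borel (Bn_closed G1 m x e).
  apply: (borel_dynamical_set G1 m x (fun a w => mdist a w <= e)) => // a g gc.
  exact: borel_ph_preimage_closed g _ gc (closed_mdist_le a e).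
split => //; last exact: borel_bigcap_nat.
apply: (borel_dynamical_set G1 n x (fun a w => mdist a w < e)) => // a g gc.
exact: borel_ph_preimage_open g _ gc (open_mdist_lt a e).
Qed.
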